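(* Let $(X,\mathcal U)$ be a non-archimedean uniform space and let $G$ be one of $F_{NA}(X,\mathcal U)$, $F^b_{NA}(X,\mathcal U)$, $A_{NA}(X,\mathcal U)$, $B_{NA}(X,\mathcal U)$, with universal map $i\colon X\to G$. Then: (1) $i\colon(X,\mathcal U)\to G$ is a uniform embedding; (2) if $G\in\{F_{NA},F^b_{NA}\}$ then $G$ is algebraically the free group on $i(X)$; if $G=A_{NA}$ (resp. $G=B_{NA}$) then $G$ is algebraically isomorphic to the free abelian group $A(X)$ (resp. the free Boolean group $B(X)$) on $i(X)$; (3) $i(X)$ is a closed subspace of $G$.
   Context: All uniform spaces and groups are Hausdorff; topological groups carry their two-sided uniformity. A uniform space is non-archimedean if its uniformity has a base of equivalence relations. A topological group is non-archimedean if it has a local base at the identity of open subgroups; balanced if its left and right uniformities coincide; Boolean if every non-identity element has order 2. For a class $\Omega$ of topological groups, $F_\Omega(X,\mathcal U)$ is a group in $\Omega$ with uniformly continuous $i\colon X\to F_\Omega$ such that every uniformly continuous map from $X$ to a group in $\Omega$ factors uniquely as a continuous homomorphism composed with $i$. $F_{NA},F^b_{NA},A_{NA},B_{NA}$ are these for $\Omega$ = non-archimedean, balanced non-archimedean, abelian non-archimedean, Boolean non-archimedean groups respectively. *)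

From HB Require Import structures.
From mathcomp Require Import all_boot all_order all_algebra.
From mathcomp Require Import all_classical all_reals all_analysis.

Set Implicit Arguments.
Unset Strict Implicit.
Unset Printing Implicit Defensive.

Local Open Scope classical_set_scope.

Record group_ops (T : Type) := GroupOps {
  gmul : T -> T -> T;
  ginv : T -> T;
  gone : T;
  gmulA : forall x y z, gmul x (gmul y z) = gmul (gmul x y) z;
  gmul1 : forall x, gmul gone x = x;
  gmulV : forall x, gmul (ginv x) x = gone }.

Record Group := MkGroup { g_car :> Type; g_ops : group_ops g_car }.

Record TopGroup := MkTopGroup {
  tg_car :> topologicalType;
  tg_ops : group_ops tg_car;
  tg_mul_cont : continuous (fun p : tg_car * tg_car => gmul tg_ops p.1 p.2);
  tg_inv_cont : continuous (ginv tg_ops);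
  tg_hausdorff : hausdorff_space tg_car }.

Definition is_hom (A B : Type) (gA : group_ops A) (gB : group_ops B)
  (f : A -> B) : Prop :=
  forall x y, f (gmul gA x y) = gmul gB (f x) (f y).

Definition is_subgroup (A : Type) (gA : group_ops A) (S : set A) : Prop :=
  S (gone gA) /\ (forall x y, S x -> S y -> S (gmul gA x y)) /\
  (forall x, S x -> S (ginv gA x)).

Definition abelian_ops (A : Type) (gA : group_ops A) : Prop :=
  forall x y, gmul gA x y = gmul gA y x.

Definition boolean_ops (A : Type) (gA : group_ops A) : Prop :=
  forall x, x <> gone gA -> gmul gA x x = gone gA.

Section TGUnif.
Variable G : TopGroup.
Local Notation "x * y" := (gmul (tg_ops G) x y).
Local Notation "x ^-1" := (ginv (tg_ops G) x).
Local Notation one := (gone (tg_ops G)).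

Definition left_ent : set_system (G * G) :=
  [set E | exists2 U : set G, nbhs one U & [set p | U (p.1^-1 * p.2)] `<=` E].
Definition right_ent : set_system (G * G) :=
  [set E | exists2 U : set G, nbhs one U & [set p | U (p.2 * p.1^-1)] `<=` E].
Definition two_ent : set_system (G * G) :=
  [set E | exists2 U : set G, nbhs one U &
     [set p | U (p.1^-1 * p.2) /\ U (p.2 * p.1^-1)] `<=` E].

Definition nonarch_group : Prop :=
  forall U : set G, nbhs one U ->
    exists V : set G, [/\ open V, is_subgroup (tg_ops G) V & V `<=` U].

Definition balanced_group : Prop := left_ent = right_ent.
End TGUnif.

Definition equiv_rel_set (X : Type) (R : set (X * X)) : Prop :=
  [/\ forall x, R (x, x),
      forall x y, R (x, y) -> R (y, x) &
      forall x y z, R (x, y) -> R (y, z) -> R (x, z)].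

Definition na_uniform (X : uniformType) : Prop :=
  forall E, entourage E ->
    exists2 R : set (X * X), entourage R & equiv_rel_set R /\ R `<=` E.

Definition unif_cont_tg (X : uniformType) (G : TopGroup) (f : X -> G) : Prop :=
  forall E, two_ent E -> entourage [set p : X * X | E (f p.1, f p.2)].

Definition unif_embedding (X : uniformType) (G : TopGroup) (f : X -> G) : Prop :=
  [/\ injective f, unif_cont_tg f &
      forall E, entourage E ->
        exists2 D, two_ent D & forall x y, D (f x, f y) -> E (x, y)].

Inductive NAclass := cNA | cNAb | cANA | cBNA.

Definition in_class (c : NAclass) (G : TopGroup) : Prop :=
  nonarch_group G /\
  match c with
  | cNA => True
  | cNAb => balanced_group G
  | cANA => abelian_ops (tg_ops G)
  | cBNA => boolean_ops (tg_ops G)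
  end.

Definition alg_class (c : NAclass) (H : Group) : Prop :=
  match c with
  | cNA | cNAb => True
  | cANA => abelian_ops (g_ops H)
  | cBNA => boolean_ops (g_ops H)
  end.

Definition free_object (P : TopGroup -> Prop) (X : uniformType)
  (G : TopGroup) (i : X -> G) : Prop :=
  [/\ P G, unif_cont_tg i &
      forall (H : TopGroup) (f : X -> H), P H -> unif_cont_tg f ->
        exists phi : G -> H,
          [/\ is_hom (tg_ops G) (tg_ops H) phi, continuous phi,
              (forall x, phi (i x) = f x) &
              forall psi : G -> H,
                is_hom (tg_ops G) (tg_ops H) psi -> continuous psi ->
                (forall x, psi (i x) = f x) -> forall g, psi g = phi g]].

Definition alg_free (Q : Group -> Prop) (X : Type) (A : Type)
  (gA : group_ops A) (i : X -> A) : Prop :=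
  forall (H : Group) (f : X -> H), Q H ->
    exists phi : A -> H,
      [/\ is_hom gA (g_ops H) phi,
          (forall x, phi (i x) = f x) &
          forall psi : A -> H, is_hom gA (g_ops H) psi ->
            (forall x, psi (i x) = f x) -> forall a, psi a = phi a].

(* Every group of the right algebraic kind, with the discrete topology, lies in
   the class, so a map from X that is constant on the classes of an equivalence
   entourage R lifts to a locally constant homomorphism on G.  Sending x to the
   indicator of its R-class in the Boolean group of maps X -> bool shows that i
   is a uniform embedding.  Given f : X -> H and a finite s separated by R, the
   map sending x to f of the first element of s that is R-equivalent to x lifts
   likewise; at each g these lifts stabilise as s grows, since the g where they
   do form a subgroup containing i(X), and i(X) generates G (the subgroup it
   generates, with the subspace topology, is again in the class).  The limiting
   values form the homomorphism extending f.  For H = G this limit is the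
   identity, so near a point g outside i(X) the identity agrees with a local
   lift, which maps i(X) into i(X) together with 1; and 1 is kept away from
   i(X) by lifting a constant map to the Boolean group. *)

From Pilot Require Import Defs.
From mathcomp Require Import all_boot all_order all_algebra.
From mathcomp Require Import all_classical all_reals all_analysis.
Set Implicit Arguments.
Unset Strict Implicit.
Unset Printing Implicit Defensive.
Local Open Scope classical_set_scope.

Section GroupOps.
Variables (T : Type) (g : group_ops T).
Local Notation "x * y" := (gmul g x y).
Local Notation "x ^-1" := (ginv g x).
Local Notation one := (gone g).

Lemma gmulxV x : x * x^-1 = one.
Proof.
have idem : (x * x^-1) * (x * x^-1) = x * x^-1.
  by rewrite -gmulA [_^-1 * _]gmulA gmulV gmul1.
by rewrite -[LHS](gmul1 g) -(gmulV g (x * x^-1)) -gmulA idem.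
Qed.

Lemma gmulx1 x : x * one = x.
Proof. by rewrite -(gmulV g x) gmulA gmulxV gmul1. Qed.

Lemma gmulI a x y : a * x = a * y -> x = y.
Proof. by move=> e; rewrite -[x](gmul1 g) -[y](gmul1 g) -(gmulV g a) -!gmulA e. Qed.

Lemma ginv_unique a b : a * b = one -> a = b^-1.
Proof. by move=> e; rewrite -[a]gmulx1 -(gmulxV b) gmulA e gmul1. Qed.

Lemma eq_mulVg1 x y : x^-1 * y = one <-> x = y.
Proof.
split=> [e|<-]; last exact: gmulV.
by rewrite -[y](gmul1 g) -(gmulxV x) -gmulA e gmulx1.
Qed.

Lemma eq_mulgV1 x y : x * y^-1 = one <-> x = y.
Proof.
split=> [e|->]; last exact: gmulxV.
by rewrite -[x]gmulx1 -(gmulV g y) gmulA e gmul1.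
Qed.
End GroupOps.

Section Homomorphisms.
Variables (A B : Type) (gA : group_ops A) (gB : group_ops B) (f : A -> B).
Hypothesis f_hom : is_hom gA gB f.

Lemma hom_gone : f (gone gA) = gone gB.
Proof. by apply: (@gmulI _ gB (f (gone gA))); rewrite -f_hom gmul1 gmulx1. Qed.

Lemma hom_ginv x : f (ginv gA x) = ginv gB (f x).
Proof. by apply: ginv_unique; rewrite -f_hom gmulV hom_gone. Qed.
End Homomorphisms.

Lemma hom_eq_subgroup (A B : Type) (gA : group_ops A) (gB : group_ops B) (f f' : A -> B) :
  is_hom gA gB f -> is_hom gA gB f' -> is_subgroup gA [set a | f a = f' a].
Proof.
move=> hf hf'; split; first by rewrite /= (hom_gone hf) (hom_gone hf').
by split=> [x y /= ex ey|x /= ex]; rewrite ?hf ?hf' ?ex ?ey // (hom_ginv hf) (hom_ginv hf') ex.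
Qed.

Lemma two_ent_refl (G : TopGroup) (E : set (G * G)) : two_ent E -> forall x, E (x, x).
Proof.
by move=> [U U1 sub] x; apply: sub; split; rewrite /= ?gmulV ?gmulxV; exact: nbhs_singleton.
Qed.

Definition locally_constant (T : topologicalType) (Y : Type) (f : T -> Y) : Prop :=
  forall t, nbhs t (f @^-1` [set f t]).

(* [left_ent] and [right_ent] are, by conversion, [diff_ent] for [d a b = a^-1 * b]
   and [d a b = b * a^-1]. *)
Definition diff_ent (G : TopGroup) (d : G -> G -> G) : set_system (G * G) :=
  [set E | exists2 U : set G, nbhs (gone (tg_ops G)) U & [set p | U (d p.1 p.2)] `<=` E].

Definition discrete_car (H : Defs.Group) := discrete_topology (classicType (g_car H)).

Lemma locally_constant_continuous (T : topologicalType) (H : Defs.Group)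
  (f : T -> discrete_car H) : locally_constant f -> continuous f.
Proof.
move=> lc t U /= Uft; apply: filterS (lc t) => s /= ->.
exact: nbhs_singleton Uft.
Qed.

Lemma continuous_locally_constant (T : topologicalType) (H : Defs.Group)
  (f : T -> discrete_car H) : continuous f -> locally_constant f.
Proof. by move=> cf t; exact: (cf t _ (@discrete_set1 _ (f t))). Qed.

Lemma discrete_nbhs (H : Defs.Group) (x : discrete_car H) (U : set (discrete_car H)) :
  U x -> nbhs x U.
Proof. by move=> Ux; have := @discrete_set1 _ x; apply: (@filterS _ (nbhs x)) => y ->. Qed.

Section DiscreteGroup.
Variable H : Defs.Group.
Local Notation D := (discrete_car H).

Lemma discrete_mul_continuous :
  continuous (fun p : D * D => (gmul (g_ops H) p.1 p.2 : D)).
Proof.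
apply: locally_constant_continuous => -[a b].
exists ([set a], [set b]); first by split; exact: discrete_nbhs.
by case=> x y /= [-> ->].
Qed.

Lemma discrete_inv_continuous : continuous (fun x : D => (ginv (g_ops H) x : D)).
Proof. by apply: locally_constant_continuous => x; exact: discrete_nbhs. Qed.

Definition discrete_tg : TopGroup :=
  MkTopGroup discrete_mul_continuous discrete_inv_continuous discrete_hausdorff.

Lemma discrete_diff_ent (d : discrete_tg -> discrete_tg -> discrete_tg) :
  (forall a b, d a b = gone (g_ops H) <-> a = b) -> diff_ent d = [set E | forall x, E (x, x)].
Proof.
move=> dE; apply/seteqP; split=> E.
- by move=> [U U1 UE] x; apply: (UE (x, x)); rewrite /= (dE x x).2 //; exact: nbhs_singleton U1.
- move=> E_refl; exists [set gone (g_ops H)]; first exact: discrete_nbhs.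
  by move=> [a b] /= /dE ->.
Qed.

Lemma discrete_tg_balanced : balanced_group discrete_tg.
Proof.
have rdiff a b : gmul (g_ops H) b (ginv (g_ops H) a) = gone (g_ops H) <-> a = b.
  by rewrite eq_mulgV1; split=> ->.
exact: etrans (discrete_diff_ent (@eq_mulVg1 _ _)) (esym (discrete_diff_ent rdiff)).
Qed.

Lemma discrete_tg_nonarch : nonarch_group discrete_tg.
Proof.
move=> U U1; exists [set gone (g_ops H)]; split.
- exact: discrete_open.
- split=> //; split=> [x y -> ->|x ->]; first by rewrite gmul1.
  by rewrite -[ginv _ _](gmulx1 (g_ops H)) gmulV.
- by move=> x ->; exact: nbhs_singleton U1.
Qed.

Lemma discrete_tg_in_class c : alg_class c H -> in_class c discrete_tg.
Proof.
move=> classH; split; first exact: discrete_tg_nonarch.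
by case: c classH => //= _; exact: discrete_tg_balanced.
Qed.
End DiscreteGroup.

Definition sub_elt (G : TopGroup) (S : set G) := {x : G | x \in S}.
Definition sub_top (G : TopGroup) (S : set G) :=
  initial_topology (fun x : sub_elt S => sval x).

Section Subgroup.
Variables (G : TopGroup) (S : set G).
Hypothesis S_subgroup : is_subgroup (tg_ops G) S.
Local Notation T := (sub_top S).
Local Notation "x * y" := (gmul (tg_ops G) x y).
Local Notation "x ^-1" := (ginv (tg_ops G) x).

Let S1 := S_subgroup.1.
Let SM := S_subgroup.2.1.
Let SV := S_subgroup.2.2.

Definition sub_mul (a b : T) : T :=
  exist _ (sval a * sval b) (mem_set (SM (set_mem (svalP a)) (set_mem (svalP b)))).
Definition sub_inv (a : T) : T := exist _ (sval a)^-1 (mem_set (SV (set_mem (svalP a)))).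
Definition sub_one : T := exist _ (gone (tg_ops G)) (mem_set S1).

Definition sub_ops : group_ops T.
Proof.
refine (@GroupOps _ sub_mul sub_inv sub_one _ _ _) => *; apply: val_inj.
- exact: gmulA.
- exact: gmul1.
- exact: gmulV.
Defined.

Lemma sval_continuous : continuous (fun x : T => (sval x : G)).
Proof. exact: initial_continuous. Qed.

Lemma sub_mul_continuous : continuous (fun p : T * T => sub_mul p.1 p.2).
Proof.
move=> p; apply: (@continuous_comp_initial _ _ _ (fun x : sub_elt S => sval x)) => q.
apply: (@continuous2_cvg _ G G G _ _ (fun p : T * T => sval p.1)
  (fun p : T * T => sval p.2) (gmul (tg_ops G))).
- exact: (@tg_mul_cont G (sval q.1, sval q.2)).
- by apply: cvg_comp; [exact: cvg_fst | exact: sval_continuous].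
- by apply: cvg_comp; [exact: cvg_snd | exact: sval_continuous].
Qed.

Lemma sub_inv_continuous : continuous sub_inv.
Proof.
move=> p; apply: (@continuous_comp_initial _ _ _ (fun x : sub_elt S => sval x)) => q.
exact: cvg_comp (@sval_continuous q) (@tg_inv_cont G (sval q)).
Qed.

Lemma sub_hausdorff : hausdorff_space T.
Proof.
move=> p q cl; apply: val_inj; apply: (@tg_hausdorff G) => A B nA nB.
have [z [Az Bz]] := cl _ _ (sval_continuous nA) (sval_continuous nB).
by exists (sval z).
Qed.

Definition sub_tg : TopGroup :=
  @MkTopGroup T sub_ops sub_mul_continuous sub_inv_continuous sub_hausdorff.

Lemma sub_nbhs_one (U : set T) : nbhs sub_one U ->
  exists W : set G, [/\ open W, W (gone (tg_ops G)) & forall x : T, W (sval x) -> U x].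
Proof. by move=> [? [[W oW <-] /= W1 sub]]; exists W. Qed.

Lemma sub_diff_ent_incl (d1 d2 : G -> G -> G) (e1 e2 : sub_tg -> sub_tg -> sub_tg) :
  (forall a b, sval (e1 a b) = d1 (sval a) (sval b)) ->
  (forall a b, sval (e2 a b) = d2 (sval a) (sval b)) ->
  diff_ent d1 `<=` diff_ent d2 -> diff_ent e1 `<=` diff_ent e2.
Proof.
move=> e1E e2E incl E [U /sub_nbhs_one [W [oW W1 WU]] UE].
have [|V V1 VW] := incl [set p | W (d1 p.1 p.2)].
  by exists W => //; exact: open_nbhs_nbhs.
exists [set x : sub_tg | V (sval x)]; first exact: sval_continuous.
by move=> [a b] /= Vab; apply/UE/WU; rewrite e1E; apply: (VW (_, _)); rewrite /= -e2E.
Qed.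

Lemma sub_tg_in_class c : in_class c G -> in_class c sub_tg.
Proof.
case=> na hc; split.
  move=> U /sub_nbhs_one [W [oW W1 WU]].
  have [V [oV [V1 [VM VV]] VW]] := na W (open_nbhs_nbhs (conj oW W1)).
  exists [set x : sub_tg | V (sval x)]; split.
  - by exists V.
  - by split => //; split => [x y|x]; [exact: VM | exact: VV].
  - by move=> x /VW /WU.
case: c hc => //=.
- move=> bal; have [lr rl] : @left_ent G `<=` @right_ent G /\ @right_ent G `<=` @left_ent G.
    by rewrite bal; split.
  apply/seteqP; split.
  + exact: (@sub_diff_ent_incl (fun a b => a^-1 * b) (fun a b => b * a^-1)
      (fun a b => gmul sub_ops (ginv sub_ops a) b) (fun a b => gmul sub_ops b (ginv sub_ops a))
      (fun _ _ => erefl) (fun _ _ => erefl) lr).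
  + exact: (@sub_diff_ent_incl (fun a b => b * a^-1) (fun a b => a^-1 * b)
      (fun a b => gmul sub_ops b (ginv sub_ops a)) (fun a b => gmul sub_ops (ginv sub_ops a) b)
      (fun _ _ => erefl) (fun _ _ => erefl) rl).
- by move=> ab x y; apply: val_inj; rewrite /= ab.
- by move=> bo x x1; apply: val_inj; apply: bo => e; apply/x1/val_inj.
Qed.
End Subgroup.

Definition bool_fun_ops (X : Type) : group_ops (X -> bool).
Proof.
refine (@GroupOps _ (fun a b z => a z (+) b z) id (fun _ => false) _ _ _) => *;
  apply: funext => t /=.
- exact: addbA.
- done.
- exact: addbb.
Defined.

Definition bool_fun_group (X : Type) : Defs.Group := MkGroup (bool_fun_ops X).

Lemma bool_fun_group_alg_class c (X : Type) : alg_class c (bool_fun_group X).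
Proof.
case: c => //= [a b|a _]; apply: funext => t /=; [exact: addbC | exact: addbb].
Qed.

Section FreeObject.
Variables (c : NAclass) (X : uniformType) (G : TopGroup) (i : X -> G).
Hypothesis free : free_object (in_class c) i.
Local Notation "x * y" := (gmul (tg_ops G) x y).
Local Notation "x ^-1" := (ginv (tg_ops G) x).

(* The subgroup [S], topologised as a subspace, is again in the class, so the
   universal property yields a continuous homomorphism [G -> S] over [i]; followed
   by the inclusion it must be the identity of [G]. *)
Lemma free_object_generated (S : set G) :
  is_subgroup (tg_ops G) S -> (forall x, S (i x)) -> forall g, S g.
Proof.
move=> S_subgroup Si g; case: free => classG i_unif univ.
pose j x : sub_tg S_subgroup := exist _ (i x) (mem_set (Si x)).
have j_unif : unif_cont_tg j.
  move=> E [U /sub_nbhs_one [W [oW W1 WU]] UE].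
  have: two_ent [set p | W (p.1^-1 * p.2) /\ W (p.2 * p.1^-1)].
    by exists W => //; exact: open_nbhs_nbhs.
  by move=> /i_unif; apply: filterS => -[x y] /= [? ?]; apply: UE; split; exact: WU.
have [r [r_hom r_cont ri _]] := univ _ j (sub_tg_in_class S_subgroup classG) j_unif.
have [phi [_ _ _ phi_unique]] := univ G i classG i_unif.
have -> : g = phi g := phi_unique id (fun _ _ => erefl) (fun _ => cvg_id) (fun _ => erefl) g.
have <- : sval (r g) = phi g.
  apply: (phi_unique (fun g => sval (r g))) => [a b||x]; first by rewrite r_hom.
  - by move=> h; apply: (@continuous_comp _ (sub_tg S_subgroup) G r (fun x => sval x));
      [exact: r_cont | exact: sval_continuous].
  - by rewrite ri.
exact: set_mem (svalP (r g)).
Qed.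

Lemma free_object_hom_unique (H : Defs.Group) (phi psi : G -> H) :
  is_hom (tg_ops G) (g_ops H) phi -> is_hom (tg_ops G) (g_ops H) psi ->
  (forall x, phi (i x) = psi (i x)) -> forall g, phi g = psi g.
Proof. by move=> hphi hpsi; apply: free_object_generated; exact: hom_eq_subgroup. Qed.

Lemma free_object_lift_discrete (H : Defs.Group) (f : X -> H) (R : set (X * X)) :
  alg_class c H -> entourage R -> (forall x y, R (x, y) -> f x = f y) ->
  exists phi : G -> H,
    [/\ is_hom (tg_ops G) (g_ops H) phi, (forall x, phi (i x) = f x) & locally_constant phi].
Proof.
move=> classH eR fR; case: free => _ _ univ.
have f_unif : unif_cont_tg (f : X -> discrete_tg H).
  by move=> E /two_ent_refl E_refl; apply: filterS eR => -[x y] /fR /= ->.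
have [phi [hom cont phi_i _]] := univ _ _ (discrete_tg_in_class classH) f_unif.
by exists phi; split => //; exact: continuous_locally_constant cont.
Qed.

(* Send [x] to the indicator of its [R]-class in the Boolean group [X -> bool];
   the kernel of the lifted homomorphism is a neighbourhood of the identity. *)
Lemma free_object_entourage (E : set (X * X)) : na_uniform X -> entourage E ->
  exists2 D, two_ent D & forall x y, D (i x, i y) -> E (x, y).
Proof.
move=> naX eE; have [R eR [[Rrefl Rsym Rtrans] RE]] := naX E eE.
pose cls x : bool_fun_group X := fun z => `[< R (x, z) >].
have cls_R x y : R (x, y) -> cls x = cls y.
  move=> Rxy; apply: funext => z; apply: asbool_equiv_eq.
  by split; [apply: Rtrans; exact: Rsym | exact: Rtrans].
have [psi [hom psi_i lc]] := free_object_lift_discrete (bool_fun_group_alg_class c X) eR cls_R.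
pose K := psi @^-1` [set psi (gone (tg_ops G))].
exists [set p | K (p.1^-1 * p.2) /\ K (p.2 * p.1^-1)]; first by exists K => //; exact: lc.
move=> x y [+ _]; rewrite /K /= hom (hom_ginv hom) !psi_i (hom_gone hom).
move=> /(congr1 (fun F => F y)) /=; rewrite /cls (asboolT (Rrefl y)).
by case: (asboolP (R (x, y))) => // Rxy _; exact: RE.
Qed.

Lemma gone_notin_closure_basis : ~ closure (range i) (gone (tg_ops G)).
Proof.
pose tt_fun (x : X) : bool_fun_group X := fun _ => true.
have [psi [hom psi_i lc]] := free_object_lift_discrete (bool_fun_group_alg_class c X)
  (@entourageT X) (fun x y _ => erefl : tt_fun x = tt_fun y).
move=> /(_ _ (lc _)) [_ [[x _ <-] /=]].
by rewrite psi_i (hom_gone hom) => /(congr1 (fun F => F x)).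
Qed.
End FreeObject.

Lemma hausdorff_entourage (X : uniformType) : hausdorff_space X ->
  forall x y : X, x <> y -> exists2 E, entourage E & ~ E (x, y).
Proof.
move=> hausX x y xy; apply: contrapT => noE; apply/xy/hausX => A B /nbhsP [E eE EA] By.
exists y; split; last exact: nbhs_singleton By.
apply/EA/mem_set; apply: contrapT => nExy; exact: noE (ex_intro2 _ _ E eE nExy).
Qed.

Definition separates (X : eqType) (R : set (X * X)) (s : seq X) : Prop :=
  {in s &, forall a b, R (a, b) -> a = b}.

Lemma separating_entourage (X : uniformType) : hausdorff_space X ->
  forall (a : X) (t : seq X), exists2 E, entourage E & {in t, forall b, E (a, b) -> a = b}.
Proof.
move=> hausX a; elim=> [|b t [E eE Esep]]; first by exists setT => //; exact: entourageT.
have [<-|ab] := pselect (a = b).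
  by exists E => // d; rewrite inE => /predU1P [->|/Esep].
have [Eb eEb nEb] := hausdorff_entourage hausX ab.
exists (E `&` Eb); first exact: filterI.
move=> d; rewrite inE => /predU1P [->|/Esep dsep] [Ead Ebad]; last exact: dsep.
by case: nEb.
Qed.

Lemma separating_equiv_entourage (X : uniformType) : hausdorff_space X -> na_uniform X ->
  forall s : seq X, exists R, [/\ entourage R, equiv_rel_set R & separates R s].
Proof.
move=> hausX naX; elim=> [|a t [Rt [eRt _ Rt_sep]]].
  by have [R eR [R_equiv _]] := naX _ entourageT; exists R.
have [Ea eEa Ea_sep] := separating_entourage hausX a t.
have [R eR [[Rrefl Rsym Rtrans] RE]] := naX _ (filterI eRt eEa).
exists R; split => // x y; rewrite !inE => /predU1P [->|xt] /predU1P [->|yt] Rxy //.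
- exact: Ea_sep (RE _ Rxy).2.
- by apply/esym/Ea_sep => //; exact: (RE _ (Rsym _ _ Rxy)).2.
- exact: Rt_sep (RE _ Rxy).1.
Qed.

Definition class_rep (X : Type) (R : set (X * X)) (s : seq X) (x : X) : option X :=
  ohead [seq y <- s | `[< R (x, y) >]].

Lemma class_rep_equiv (X : Type) (R : set (X * X)) s x x' :
  equiv_rel_set R -> R (x, x') -> class_rep R s x = class_rep R s x'.
Proof.
move=> [_ Rsym Rtrans] Rxx'; congr ohead; apply: eq_filter => y.
by apply: asbool_equiv_eq; split; [apply: Rtrans; exact: Rsym | exact: Rtrans].
Qed.

Lemma class_rep_separated (X : eqType) (R : set (X * X)) s x :
  equiv_rel_set R -> separates R s -> x \in s -> class_rep R s x = Some x.
Proof.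
move=> [Rrefl _ _] Rsep xs; rewrite /class_rep.
have: x \in [seq y <- s | `[< R (x, y) >]] by rewrite mem_filter xs andbT; exact/asboolP.
case e: [seq y <- s | _] => [//|y t] _ /=.
have: y \in [seq y <- s | `[< R (x, y) >]] by rewrite e mem_head.
by rewrite mem_filter => /andP [/asboolP Rxy ys]; rewrite (Rsep _ _ xs ys Rxy).
Qed.

Section AlgebraicFreeness.
Variables (c : NAclass) (X : uniformType) (G : TopGroup) (i : X -> G).
Hypotheses (hausX : hausdorff_space X) (naX : na_uniform X).
Hypothesis free : free_object (in_class c) i.
Variables (H : Defs.Group) (f : X -> H).
Hypothesis classH : alg_class c H.
Local Notation "x * y" := (gmul (tg_ops G) x y).
Local Notation "x ^-1" := (ginv (tg_ops G) x).
Local Notation one := (gone (tg_ops G)).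
Local Notation hom := (is_hom (tg_ops G) (g_ops H)).

Definition class_lift (R : set (X * X)) (s : seq X) (x : X) : H :=
  oapp f (gone (g_ops H)) (class_rep R s x).

Lemma local_lift_exists R s : exists psi : G -> H,
  entourage R -> equiv_rel_set R ->
  [/\ hom psi, forall x, psi (i x) = class_lift R s x & locally_constant psi].
Proof.
have [eR_equiv|] := pselect (entourage R /\ equiv_rel_set R); last first.
  by move=> nR; exists (fun=> gone (g_ops H)) => eR R_equiv; case: nR.
have class_lift_equiv x y : R (x, y) -> class_lift R s x = class_lift R s y.
  by move=> Rxy; rewrite /class_lift (class_rep_equiv s eR_equiv.2 Rxy).
by have [psi lift] := free_object_lift_discrete free classH eR_equiv.1 class_lift_equiv;
  exists psi.
Qed.

Definition local_lift R s : G -> H := projT1 (cid (local_lift_exists R s)).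

Lemma local_liftP R s : entourage R -> equiv_rel_set R ->
  [/\ hom (local_lift R s), forall x, local_lift R s (i x) = class_lift R s x &
      locally_constant (local_lift R s)].
Proof. exact: projT2 (cid (local_lift_exists R s)). Qed.

(* [v] is the eventual value at [g] of the local lifts, along the directed set
   of finite subsets of [X] containing [s] with entourages separating them. *)
Definition stable_at (s : seq X) (g : G) (v : H) : Prop :=
  forall t R, {subset s <= t} -> entourage R -> equiv_rel_set R -> separates R t ->
    local_lift R t g = v.

Lemma stable_at_unique s1 s2 g v1 v2 : stable_at s1 g v1 -> stable_at s2 g v2 -> v1 = v2.
Proof.
move=> st1 st2; have [R [eR R_equiv Rsep]] := separating_equiv_entourage hausX naX (s1 ++ s2).
rewrite -(st1 (s1 ++ s2) R) -?(st2 (s1 ++ s2) R) // => x xs; by rewrite mem_cat xs ?orbT.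
Qed.

Lemma stable_at_mul s1 s2 g h v1 v2 : stable_at s1 g v1 -> stable_at s2 h v2 ->
  stable_at (s1 ++ s2) (g * h) (gmul (g_ops H) v1 v2).
Proof.
move=> st1 st2 t R sub eR R_equiv Rsep; have [lift_hom _ _] := local_liftP t eR R_equiv.
by rewrite lift_hom (st1 t R) ?(st2 t R) // => x xs; apply: sub; rewrite mem_cat xs ?orbT.
Qed.

Lemma stable_at_inv s g v : stable_at s g v -> stable_at s g^-1 (ginv (g_ops H) v).
Proof.
move=> st t R sub eR R_equiv Rsep; have [lift_hom _ _] := local_liftP t eR R_equiv.
by rewrite (hom_ginv lift_hom) (st t R).
Qed.

Lemma stable_at_one : stable_at [::] one (gone (g_ops H)).
Proof.
move=> t R _ eR R_equiv _; have [lift_hom _ _] := local_liftP t eR R_equiv.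
exact: hom_gone lift_hom.
Qed.

Lemma stable_at_basis x : stable_at [:: x] (i x) (f x).
Proof.
move=> t R sub eR R_equiv Rsep; have [_ -> _] := local_liftP t eR R_equiv.
by rewrite /class_lift class_rep_separated // sub ?mem_head.
Qed.

Lemma stable_at_exists g : exists sv : seq X * H, stable_at sv.1 g sv.2.
Proof.
apply: (free_object_generated free (S := [set g | exists sv, stable_at sv.1 g sv.2])) => [|x];
  last by exists ([:: x], f x); exact: stable_at_basis.
split; first by exists ([::], gone (g_ops H)); exact: stable_at_one.
split=> [a b [[s1 v1] st1] [[s2 v2] st2]|a [[s v] st]].
- by exists (s1 ++ s2, gmul (g_ops H) v1 v2); exact: stable_at_mul.
- by exists (s, ginv (g_ops H) v); exact: stable_at_inv.
Qed.

Definition stable_support g : seq X := (projT1 (cid (stable_at_exists g))).1.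
Definition limit_lift g : H := (projT1 (cid (stable_at_exists g))).2.

Lemma limit_liftP g : stable_at (stable_support g) g (limit_lift g).
Proof. exact: projT2 (cid (stable_at_exists g)). Qed.

Lemma limit_lift_hom : hom limit_lift.
Proof.
move=> g h; apply: stable_at_unique (@limit_liftP (g * h)) _.
exact: stable_at_mul (@limit_liftP g) (@limit_liftP h).
Qed.

Lemma limit_lift_basis x : limit_lift (i x) = f x.
Proof. exact: stable_at_unique (@limit_liftP (i x)) (@stable_at_basis x). Qed.

Lemma limit_lift_local g : exists R s,
  [/\ entourage R, equiv_rel_set R & local_lift R s g = limit_lift g].
Proof.
have [R [eR R_equiv Rsep]] := separating_equiv_entourage hausX naX (stable_support g).
by exists R, (stable_support g); split => //; exact: limit_liftP.
Qed.
End AlgebraicFreeness.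

Section Properties.
Variables (c : NAclass) (X : uniformType) (G : TopGroup) (i : X -> G).
Hypotheses (hausX : hausdorff_space X) (naX : na_uniform X).
Hypothesis free : free_object (in_class c) i.

Lemma free_object_unif_embedding : unif_embedding i.
Proof.
split=> [x y ixy||E eE]; last exact: (free_object_entourage free naX eE).
- apply: contrapT => xy; have [E eE nE] := hausdorff_entourage hausX xy.
  have [D D2 DE] := free_object_entourage free naX eE.
  by apply/nE/DE; rewrite ixy; exact: two_ent_refl.
- by case: free.
Qed.

Lemma free_object_alg_free : alg_free (alg_class c) (tg_ops G) i.
Proof.
move=> H f classH; exists (limit_lift free f classH); split.
- exact: limit_lift_hom.
- exact: limit_lift_basis.
- move=> psi psi_hom psi_i.
  apply: (free_object_hom_unique free psi_hom (limit_lift_hom hausX naX free f classH)) => x.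
  by rewrite psi_i limit_lift_basis.
Qed.

Lemma free_object_closed_range : closed (range i).
Proof.
move=> g g_cl; apply: contrapT => g_notin.
have g1 : g <> gone (tg_ops G) by move=> g1; apply: (gone_notin_closure_basis free); rewrite -g1.
pose Galg := MkGroup (tg_ops G).
have classGalg : alg_class c Galg by case: free => -[_]; case: c.
have [R [s [eR R_equiv lift_g]]] := limit_lift_local hausX naX free (i : X -> Galg) classGalg g.
have limit_id : limit_lift free (i : X -> Galg) classGalg g = g.
  apply: (free_object_hom_unique free (limit_lift_hom hausX naX _ _ _) (fun _ _ => erefl)).
  by move=> x; rewrite limit_lift_basis.
have [_ lift_i lift_lc] := local_liftP free (i : X -> Galg) classGalg s eR R_equiv.
have [_ [[x _ <-] /=]] := g_cl _ (lift_lc g).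
rewrite lift_i lift_g limit_id /class_lift; case: class_rep => [y|] /= iy_g.
- by apply: g_notin; exists y.
- exact: g1.
Qed.
End Properties.

Theorem theorem3p9 (c : NAclass) (X : uniformType) (G : TopGroup) (i : X -> G) :
  hausdorff_space X -> na_uniform X -> free_object (in_class c) i ->
  [/\ unif_embedding i,
      alg_free (alg_class c) (tg_ops G) i &
      closed (range i)].
Proof.
move=> hausX naX free; split.
- exact: free_object_unif_embedding hausX naX free.
- exact: free_object_alg_free hausX naX free.
- exact: free_object_closed_range hausX naX free.
Qed.
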